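(* Let $m=2$ attributes take values in $\{1,\dots,d\}$, let $\mathcal{Z}^{\mathsf{train}}\subseteq\{1,\dots,d\}^2$, and consider the graph on $\mathcal{Z}^{\mathsf{train}}$ in which two attribute vectors are adjacent iff their Hamming distance is one. Let $C_1,\dots,C_K$ be the maximal connected components of this graph, so $\mathcal{Z}^{\mathsf{train}}=C_1\cup\dots\cup C_K$. Then: (i) if a connected component $C$ is contiguous, then $\mathsf{DAff}(C)$ equals the smallest subgrid containing $C$; (ii) if $C_1,\dots,C_K$ are all contiguous, then $\mathsf{DAff}(C_1\cup\dots\cup C_K)$ equals the union over $j$ of the smallest subgrids containing $C_j$.
   Context: For $z=(z_1,z_2)$, $\sigma(z)\in\{0,1\}^{2d}$ is the concatenation of the one-hot encodings of $z_1,z_2$, and for finite $\mathcal{A}=\{z^{(1)},\dots,z^{(k)}\}\subseteq\{1,\dots,d\}^2$, $\mathsf{DAff}(\mathcal{A})=\{z\in\{1,\dots,d\}^2:\exists\alpha\in\mathbb{R}^k,\ \sum_i\alpha_i=1,\ \sigma(z)=\sum_i\alpha_i\sigma(z^{(i)})\}$. A set $C$ is contiguous if for each coordinate $j\in\{1,2\}$, with $\min_j,\max_j$ the smallest and largest values of the $j$-th coordinate over $C$, every value in $\{\min_j,\min_j+1,\dots,\max_j\}$ is taken by the $j$-th coordinate of some point of $C$. The smallest subgrid containing such $C$ is $\{\min_1,\dots,\max_1\}\times\{\min_2,\dots,\max_2\}$. *)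

From HB Require Import structures.
From mathcomp Require Import all_boot all_order all_algebra.
From mathcomp Require Import reals.
Set Implicit Arguments. Unset Strict Implicit. Unset Printing Implicit Defensive.
Import Order.TTheory GRing.Theory Num.Theory.

(* Attribute values {1,...,d} are represented by 'I_d = {0,...,d-1}
   (value v+1 <-> ordinal v). Attribute vectors: 'I_d * 'I_d. *)
Notation grid d := ('I_d * 'I_d)%type.

Section Defs.
Variable d : nat.

Definition onehot (R : realType) (v : 'I_d) : 'rV[R]_d :=
  \row_(j < d) ((j == v)%:R)%R.

Definition sigma (R : realType) (z : grid d) : 'rV[R]_(d + d) :=
  row_mx (onehot R z.1) (onehot R z.2).

Definition DAff (R : realType) (A : {set grid d}) (z : grid d) : Prop :=
  exists alpha : grid d -> R,
    (\sum_(a in A) alpha a = 1)%R /\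
    sigma R z = (\sum_(a in A) alpha a *: sigma R a)%R.

Definition ham1 (z w : grid d) : bool :=
  ((z.1 == w.1) && (z.2 != w.2)) || ((z.1 != w.1) && (z.2 == w.2)).

Definition zrel (Z : {set grid d}) : rel (grid d) :=
  fun z w => [&& z \in Z, w \in Z & ham1 z w].

Definition is_component (Z C : {set grid d}) : Prop :=
  exists2 x, x \in Z & C = [set y | connect (zrel Z) x y].

Definition cmin (f : grid d -> 'I_d) (C : {set grid d}) : nat :=
  \big[minn/d]_(a in C) (f a : nat).
Definition cmax (f : grid d -> 'I_d) (C : {set grid d}) : nat :=
  \max_(a in C) (f a : nat).

Definition contiguous_along (f : grid d -> 'I_d) (C : {set grid d}) : Prop :=
  forall v : nat, cmin f C <= v <= cmax f C ->
    exists2 a, a \in C & (f a : nat) = v.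

Definition contiguous (C : {set grid d}) : Prop :=
  contiguous_along fst C /\ contiguous_along snd C.

Definition subgrid (C : {set grid d}) : {set grid d} :=
  [set z : grid d | (cmin fst C <= z.1 <= cmax fst C)
                  && (cmin snd C <= z.2 <= cmax snd C)].

End Defs.

From HB Require Import structures.
From mathcomp Require Import all_boot all_order all_algebra.
From mathcomp Require Import reals.
Set Implicit Arguments. Unset Strict Implicit. Unset Printing Implicit Defensive.
Import Order.TTheory GRing.Theory Num.Theory.

(* For predicates [P], [Q] on attribute values, [P z.1] and [Q z.2] are linear
   functionals of [sigma z], so a relation [P a.1 = Q a.2] holding on [A]
   persists on [DAff A].  Applied to the projections of [A], this confines
   [DAff A] to the subgrid of [A]; applied to the projections of a connected
   component of [Z], it shows that both coordinates of a point of [DAff Z] are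
   taken from one component.  Conversely, along an edge [w -- y] with
   [w.1 = y.1] the identity [sigma (t, y.2) = sigma (t, w.2) - sigma w + sigma y]
   propagates membership in [DAff C], so [DAff C] contains [(u.1, v.2)] for all
   [u], [v] in the component [C]; this fills the subgrid when [C] is
   contiguous. *)

Lemma connect_ind (T : finType) (e : rel T) (P : T -> Prop) x y :
  P x -> (forall a b, connect e x a -> e a b -> P a -> P b) ->
  connect e x y -> P y.
Proof.
move=> Px step /connectP[p + ->].
suff: forall a, connect e x a -> P a -> path e a p -> P (last a p) by apply.
elim: p => [|b p IHp] a xa Pa //= /andP[eab pab].
by apply: IHp pab; [exact: connect_trans xa (connect1 eab) | exact: step eab Pa].
Qed.

Section Subgrid.
Variable d : nat.
Implicit Types (C : {set grid d}) (f : grid d -> 'I_d) (i : 'I_d) (z : grid d).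

Lemma cmin_le f C c : c \in C -> cmin f C <= f c.
Proof. exact: (@bigmin_le_cond _ nat _ d c _ (fun a => nat_of_ord (f a))). Qed.

Lemma cmax_ge f C c : c \in C -> f c <= cmax f C.
Proof. exact: (@leq_bigmax_cond _ _ (fun a => nat_of_ord (f a)) c). Qed.

Lemma imset_bounds f C i : i \in f @: C -> cmin f C <= i <= cmax f C.
Proof. by case/imsetP=> c cC ->; rewrite cmin_le ?cmax_ge. Qed.

Lemma contiguous_along_imset f C i :
  contiguous_along f C -> cmin f C <= i <= cmax f C -> i \in f @: C.
Proof. by move=> contC /contC[c cC /val_inj <-]; exact: imset_f. Qed.

Lemma subgrid_imset C z :
  z.1 \in [set a.1 | a in C] -> z.2 \in [set a.2 | a in C] -> z \in subgrid C.
Proof. by move=> /imset_bounds b1 /imset_bounds b2; rewrite inE b1 b2. Qed.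

Lemma mem_subgrid_contiguous C z : contiguous C ->
  (z \in subgrid C) = (z.1 \in [set a.1 | a in C]) && (z.2 \in [set a.2 | a in C]).
Proof.
move=> [cont1 cont2]; apply/idP/andP => [|[]]; last exact: subgrid_imset.
by rewrite inE => /andP[/(contiguous_along_imset cont1) ? /(contiguous_along_imset cont2)].
Qed.

End Subgrid.

Section AffineSpan.
Variables (R : realType) (d : nat).
Local Open Scope ring_scope.
Implicit Types (A B : {set grid d}) (z : grid d).

Lemma sigma_lshift z j : sigma R z 0 (lshift d j) = (j == z.1)%:R.
Proof. by rewrite /sigma row_mxEl mxE. Qed.

Lemma sigma_rshift z j : sigma R z 0 (rshift d j) = (j == z.2)%:R.
Proof. by rewrite /sigma row_mxEr mxE. Qed.

Lemma sum_indicator (P : pred 'I_d) x : \sum_(j | P j) (j == x)%:R = (P x)%:R :> R.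
Proof.
case Px: (P x); last by rewrite big1 // => j Pj; case: eqP Pj => // ->; rewrite Px.
by rewrite (bigD1 x) //= eqxx big1 ?addr0 // => j /andP[_ /negbTE ->].
Qed.

Lemma DAff_coord_invariant A z (P Q : pred 'I_d) :
  {in A, forall a, P a.1 = Q a.2} -> DAff R A z -> P z.1 = Q z.2.
Proof.
move=> PQ [alpha [_ sigma_z]].
have coord1 j : (j == z.1)%:R = \sum_(a in A) alpha a * (j == a.1)%:R :> R.
  by rewrite -sigma_lshift sigma_z summxE; apply: eq_bigr => a _; rewrite mxE sigma_lshift.
have coord2 j : (j == z.2)%:R = \sum_(a in A) alpha a * (j == a.2)%:R :> R.
  by rewrite -sigma_rshift sigma_z summxE; apply: eq_bigr => a _; rewrite mxE sigma_rshift.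
suff: (P z.1)%:R = (Q z.2)%:R :> R by move/eqP; rewrite eqr_nat; case: (P z.1); case: (Q z.2).
rewrite -!sum_indicator (eq_bigr _ (fun j _ => coord1 j)) (eq_bigr _ (fun j _ => coord2 j)).
rewrite exchange_big [in RHS]exchange_big; apply: eq_bigr => a aA /=.
by rewrite -!mulr_sumr !sum_indicator PQ.
Qed.

Lemma DAff_imset_fst A z : DAff R A z -> z.1 \in [set a.1 | a in A].
Proof.
move=> Az; apply: (@DAff_coord_invariant A z [in [set a.1 | a in A]] predT) => //.
by move=> a aA; rewrite /= imset_f.
Qed.

Lemma DAff_imset_snd A z : DAff R A z -> z.2 \in [set a.2 | a in A].
Proof.
move=> Az; symmetry; apply: (@DAff_coord_invariant A z predT [in [set a.2 | a in A]]) => //.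
by move=> a aA; rewrite /= imset_f.
Qed.

Lemma DAff_subgrid A z : DAff R A z -> z \in subgrid A.
Proof. by move=> Az; rewrite subgrid_imset ?DAff_imset_fst ?DAff_imset_snd. Qed.

Lemma DAff_mem A u : u \in A -> DAff R A u.
Proof.
move=> uA; exists (fun a => (a == u)%:R); split.
  by rewrite (bigD1 u) //= eqxx big1 ?addr0 // => a /andP[_ /negbTE ->].
rewrite (bigD1 u) //= eqxx scale1r big1 ?addr0 // => a /andP[_ /negbTE ->].
by rewrite scale0r.
Qed.

Lemma DAff_subset A B z : A \subset B -> DAff R A z -> DAff R B z.
Proof.
move=> /subsetP sAB [alpha [sum1 sigma_z]].
have restrict (V : zmodType) (F : grid d -> V) :
    \sum_(a in B) (if a \in A then F a else 0) = \sum_(a in A) F a.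
  rewrite -big_mkcondr; apply: eq_bigl => a.
  by case aA: (a \in A); rewrite ?andbT ?andbF // sAB.
exists (fun a => if a \in A then alpha a else 0); rewrite restrict; split=> //.
rewrite sigma_z -restrict; apply: eq_bigr => a _.
by case: ifP; rewrite ?scale0r.
Qed.

Lemma sigma_rect (a a' b b' : 'I_d) :
  sigma R (a, b') = sigma R (a, b) - sigma R (a', b) + sigma R (a', b').
Proof. by rewrite /sigma /= opp_row_mx !add_row_mx subrK subrr add0r. Qed.

Lemma DAff_rect A (a a' b b' : 'I_d) :
  DAff R A (a, b) -> DAff R A (a', b) -> DAff R A (a', b') -> DAff R A (a, b').
Proof.
move=> [al1 [s1 e1]] [al2 [s2 e2]] [al3 [s3 e3]].
exists (fun c => al1 c - al2 c + al3 c); split.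
  by rewrite big_split /= sumrB s1 s2 s3 subrr add0r.
rewrite (sigma_rect a a' b b') e1 e2 e3 -sumrB -big_split; apply: eq_bigr => c _.
by rewrite scalerDl scalerBl.
Qed.

End AffineSpan.

Section Components.
Variable d : nat.
Implicit Types (Z : {set grid d}) (x z : grid d).

Definition component Z x : {set grid d} := [set y | connect (zrel Z) x y].

Lemma zrel_sym Z : symmetric (zrel Z).
Proof.
move=> z w; rewrite /zrel /ham1 andbCA.
by rewrite (eq_sym w.1) (eq_sym w.2).
Qed.

Lemma component_connect Z x u v :
  u \in component Z x -> v \in component Z x -> connect (zrel Z) u v.
Proof.
rewrite !inE => xu; apply: connect_trans.
by rewrite (sym_connect_sym (@zrel_sym Z)).
Qed.

Lemma component_connect_closed Z x a b :
  a \in component Z x -> connect (zrel Z) a b -> b \in component Z x.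
Proof. by rewrite !inE => /connect_trans; apply. Qed.

Lemma component_sub Z x : x \in Z -> component Z x \subset Z.
Proof.
move=> xZ; apply/subsetP => y; rewrite inE.
by apply: (connect_ind (P := [in Z])) => // a b _ /and3P[].
Qed.

Lemma ham1_line z w : z != w -> (z.1 == w.1) || (z.2 == w.2) -> ham1 z w.
Proof.
case: z w => [z1 z2] [w1 w2] /=; rewrite xpair_eqE /ham1 /=.
by case: (z1 == w1); case: (z2 == w2).
Qed.

Lemma mem_component_line Z x c b : x \in Z -> c \in component Z x -> b \in Z ->
  (c.1 == b.1) || (c.2 == b.2) -> b \in component Z x.
Proof.
move=> xZ xc bZ line; have [<- //|neq_cb] := eqVneq c b.
have cZ : c \in Z by apply: (subsetP (component_sub xZ)).
apply: (component_connect_closed xc (connect1 _)).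
by rewrite /zrel cZ bZ ham1_line.
Qed.

Lemma component_imset_fst Z x b : x \in Z -> b \in Z ->
  (b.1 \in [set a.1 | a in component Z x]) = (b \in component Z x).
Proof.
move=> xZ bZ; apply/imsetP/idP => [[c xc eq_b1]|xb]; last by exists b.
by apply: mem_component_line xZ xc bZ _; rewrite -eq_b1 eqxx.
Qed.

Lemma component_imset_snd Z x b : x \in Z -> b \in Z ->
  (b.2 \in [set a.2 | a in component Z x]) = (b \in component Z x).
Proof.
move=> xZ bZ; apply/imsetP/idP => [[c xc eq_b2]|xb]; last by exists b.
by apply: mem_component_line xZ xc bZ _; rewrite -eq_b2 eqxx orbT.
Qed.

End Components.

Section ComponentSpan.
Variables (R : realType) (d : nat).
Implicit Types (Z : {set grid d}) (x z : grid d).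

Lemma DAff_component Z x z :
  z.1 \in [set a.1 | a in component Z x] ->
  z.2 \in [set a.2 | a in component Z x] -> DAff R (component Z x) z.
Proof.
case: z => z1 z2 /= /imsetP[u xu ->] /imsetP[v xv ->].
apply: (connect_ind (P := fun w => DAff R (component Z x) (u.1, w.2))) _ _
  (component_connect xu xv).
  by rewrite -surjective_pairing; exact: DAff_mem.
move=> w y uw wy Dw.
have xw := component_connect_closed xu uw.
have xy := component_connect_closed xw (connect1 wy).
case/and3P: wy => _ _ /orP[] /andP[eq1 eq2]; last by rewrite -(eqP eq2).
apply: (DAff_rect (a' := w.1) Dw); first by rewrite -surjective_pairing; exact: DAff_mem.
by rewrite (eqP eq1) -surjective_pairing; exact: DAff_mem.
Qed.

Lemma DAff_component_contiguous Z x z : contiguous (component Z x) ->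
  DAff R (component Z x) z <-> z \in subgrid (component Z x).
Proof.
move=> contC; split; first exact: DAff_subgrid.
by rewrite mem_subgrid_contiguous // => /andP[]; exact: DAff_component.
Qed.

Lemma DAff_components Z z :
  DAff R Z z -> exists2 x, x \in Z & z \in subgrid (component Z x).
Proof.
move=> Zz; have /imsetP[x xZ eq_z1] := DAff_imset_fst Zz.
have z1C : z.1 \in [set a.1 | a in component Z x] by rewrite eq_z1 imset_f // inE.
have inv := @DAff_coord_invariant R d Z z
  [in [set a.1 | a in component Z x]] [in [set a.2 | a in component Z x]].
rewrite /= z1C in inv; exists x; rewrite // subgrid_imset // -inv // => b bZ /=.
by rewrite component_imset_fst ?component_imset_snd.
Qed.

End ComponentSpan.

Theorem theorem9 (R : realType) (d : nat) (Ztrain : {set grid d}) :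
  (forall C : {set grid d}, is_component Ztrain C -> contiguous C ->
     forall z : grid d, DAff R C z <-> z \in subgrid C) /\
  ((forall C : {set grid d}, is_component Ztrain C -> contiguous C) ->
     forall z : grid d, DAff R Ztrain z <->
       exists2 C : {set grid d}, is_component Ztrain C & z \in subgrid C).
Proof.
split=> [C [x _ ->] contC z|all_contiguous z]; first exact: DAff_component_contiguous.
split=> [/DAff_components[x xZ zC]|[C [x xZ ->] zC]].
  by exists (component Ztrain x) => //; exists x.
apply: (DAff_subset (component_sub xZ)).
by apply/DAff_component_contiguous => //; apply: all_contiguous; exists x.
Qed.
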